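(* Let $A$ be a division ring and let $R=A[x]$ be the polynomial ring over $A$ in a central indeterminate $x$. If $R$ is right quasi-invariant, then $A$ is a field.
   Context: All rings are associative, unital and non-zero. A ring is right quasi-invariant if every maximal right ideal of it is a two-sided ideal. *)

From HB Require Import structures.
From mathcomp Require Import all_boot all_order all_algebra.
Set Implicit Arguments. Unset Strict Implicit. Unset Printing Implicit Defensive.
Import GRing.Theory.
Local Open Scope ring_scope.

Definition right_ideal (R : nzRingType) (I : R -> Prop) : Prop :=
  [/\ I 0, (forall a b, I a -> I b -> I (a - b)) & (forall a r, I a -> I (a * r))].

Definition two_sided_ideal (R : nzRingType) (I : R -> Prop) : Prop :=
  right_ideal I /\ (forall r a, I a -> I (r * a)).

Definition maximal_right_ideal (R : nzRingType) (I : R -> Prop) : Prop :=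
  [/\ right_ideal I, ~ I 1 &
      forall J : R -> Prop, right_ideal J -> ~ J 1 ->
        (forall a, I a -> J a) -> forall a, J a -> I a].

Definition right_quasi_invariant (R : nzRingType) : Prop :=
  forall I : R -> Prop, maximal_right_ideal I -> two_sided_ideal I.

Definition division_ring (A : unitRingType) : Prop :=
  forall a : A, a != 0 -> a \is a GRing.unit.

(** The right ideal [(x - a)R] is maximal: left division by the monic [x - a]
    leaves a constant remainder, and a unit constant generates everything.
    If it is two-sided it contains [b(x - a) - (x - a)b = ab - ba], a constant
    multiple of [x - a], which forces [ab = ba]. *)

From HB Require Import structures.
From mathcomp Require Import all_boot all_order all_algebra.
Set Implicit Arguments. Unset Strict Implicit. Unset Printing Implicit Defensive.
Local Open Scope ring_scope.
Import GRing.Theory.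

Definition left_multiples (R : nzRingType) (d : R) (f : R) : Prop :=
  exists q, f = d * q.

Lemma right_ideal_left_multiples (R : nzRingType) (d : R) :
  right_ideal (left_multiples d).
Proof.
split; first by exists 0; rewrite mulr0.
  by move=> _ _ [q ->] [r ->]; exists (q - r); rewrite mulrBr.
by move=> _ r [q ->]; exists (q * r); rewrite mulrA.
Qed.

Lemma monic_mul_polyC_eq0 (R : nzRingType) (p q : {poly R}) (c : R) :
  p \is monic -> (1 < size p)%N -> c%:P = p * q -> c = 0.
Proof.
move=> mp sp cE; have [q0|qn0] := eqVneq q 0.
  by move: cE; rewrite q0 mulr0 => /polyC_inj.
have := size_polyC_leq1 c; rewrite cE size_monicM //; rewrite -size_poly_eq0 in qn0.
by case: (size q) qn0 => // n _; case: (size p) sp => [|[|m]] // _; rewrite addSn addnS.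
Qed.

Lemma XsubC_mul_polyC_eq0 (R : nzRingType) (a c : R) (q : {poly R}) :
  c%:P = ('X - a%:P) * q -> c = 0.
Proof. by apply: monic_mul_polyC_eq0; rewrite ?monicXsubC ?size_XsubC. Qed.

Lemma XsubC_ldiv (R : nzRingType) (a : R) (f : {poly R}) :
  exists q c, f = ('X - a%:P) * q + c%:P.
Proof.
elim/poly_ind: f => [|p d [q [c ->]]]; first by exists 0, 0; rewrite mulr0 add0r.
exists (q * 'X + c%:P), (a * c + d).
have cX : c%:P * 'X = ('X - a%:P) * c%:P + (a * c)%:P.
  by rewrite (commr_polyX c%:P) polyCM mulrBl subrK.
by rewrite mulrDl -mulrA cX polyCD mulrDr !addrA.
Qed.

Lemma maximal_right_ideal_XsubC (A : unitRingType) (a : A) :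
  division_ring A -> maximal_right_ideal (left_multiples ('X - a%:P)).
Proof.
move=> divA; split; first exact: right_ideal_left_multiples.
  by move=> [q]; rewrite -polyC1 => /XsubC_mul_polyC_eq0 /eqP; rewrite oner_eq0.
move=> J [_ JB JM] nJ1 sub_J f Jf.
have [q [c fE]] := XsubC_ldiv a f.
have Jc : J c%:P.
  have -> : c%:P = f - ('X - a%:P) * q by rewrite fE addrC addKr.
  by apply: JB => //; apply: sub_J; exists q.
have [c0|cn0] := eqVneq c 0; first by exists q; rewrite fE c0 addr0.
by case: nJ1; have := JM _ c^-1%:P Jc; rewrite -polyCM mulrV ?divA ?polyC1.
Qed.

Lemma polyC_commutator_XsubC (R : nzRingType) (a b : R) :
  b%:P * ('X - a%:P) - ('X - a%:P) * b%:P = (a * b - b * a)%:P.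
Proof.
rewrite mulrBr mulrBl (commr_polyX b%:P) -!polyCM polyCB opprB addrA.
by rewrite addrC !addrA addNr add0r addrC.
Qed.

Theorem lemma2p1 (A : unitRingType) :
  division_ring A -> right_quasi_invariant {poly A} ->
  forall a b : A, a * b = b * a.
Proof.
move=> divA rqi a b.
have [[_ IB _] IL] := rqi _ (maximal_right_ideal_XsubC a divA).
have [q qE] : left_multiples ('X - a%:P) (a * b - b * a)%:P.
  rewrite -polyC_commutator_XsubC; apply: IB; last by exists b%:P.
  by apply: IL; exists 1; rewrite mulr1.
by apply/eqP; rewrite -subr_eq0; apply/eqP; apply: XsubC_mul_polyC_eq0 qE.
Qed.
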